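(* Let $(\mathcal J_1,\mathcal J_2,\mathcal J_3)$ be a generalized almost hypercomplex structure and $D$ a generalized connection on a Courant algebroid $E$ with $D\mathcal J_1=0$. Define $D^{(1)}_u:=D_u-\frac12\mathcal J_2(D_u\mathcal J_2)$ and $\tilde D:=D^{(1)}-\frac16\tilde\pi(T^{D^{(1)}})$, where $\tilde\pi:\Lambda^3E^*\to E^*\otimes\Lambda^2E^*$ is $(\tilde\pi\alpha)(u,v,w)=\alpha(u,v,w)+\sum_{i=1}^3\alpha(u,\mathcal J_iv,\mathcal J_iw)$ and, for $\eta\in E^*\otimes\Lambda^2E^*$, $D^{(1)}+\eta$ means $\langle(D^{(1)}+\eta)_uv,w\rangle=\langle D^{(1)}_uv,w\rangle+\eta(u,v,w)$. Then $D^{(1)}$ and $\tilde D$ are generalized connections preserving each $\mathcal J_i$, $i=1,2,3$, and $$T^{\tilde D}(u,v,w)=\tfrac16\sum_{i=1}^3N_{\mathcal J_i}(u,v,w).$$ In particular, if $(\mathcal J_1,\mathcal J_2,\mathcal J_3)$ is a generalized hypercomplex structure, then $\tilde D$ is torsion-free (and hypercomplex).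
   Context: A Courant algebroid on $M$ is a real vector bundle $E\to M$ with nondegenerate symmetric bilinear form $\langle\cdot,\cdot\rangle$, an $\mathbb R$-bilinear bracket $[\cdot,\cdot]$ on $\Gamma(E)$ and bundle map $\pi:E\to TM$ such that for $u,v,w\in\Gamma(E)$, $f\in C^\infty(M)$: $[u,[v,w]]=[[u,v],w]+[v,[u,w]]$; $\pi([u,v])=[\pi(u),\pi(v)]$; $[u,fv]=\pi(u)(f)v+f[u,v]$; $\pi(u)\langle v,w\rangle=\langle[u,v],w\rangle+\langle v,[u,w]\rangle$; $2\langle[u,u],v\rangle=\pi(v)\langle u,u\rangle$. A generalized connection is an $\mathbb R$-linear $D:\Gamma(E)\to\Gamma(E^*\otimes E)$ with $D_u(fv)=\pi(u)(f)v+fD_uv$ and $\pi(u)\langle v,w\rangle=\langle D_uv,w\rangle+\langle v,D_uw\rangle$; its torsion $T^D(u,v)=D_uv-D_vu-[u,v]+(Du)^*v$ ($(Du)^*$ adjoint of $w\mapsto D_wu$) is viewed as the 3-form $T^D(u,v,w)=\langle T^D(u,v),w\rangle$. A generalized almost complex structure is a $\langle\cdot,\cdot\rangle$-orthogonal $\mathcal J$ with $\mathcal J^2=-\mathrm{Id}$; $N_{\mathcal J}(u,v)=[\mathcal Ju,\mathcal Jv]-[u,v]-\mathcal J([\mathcal Ju,v]+[u,\mathcal Jv])$, viewed as the 3-form $\langle N_{\mathcal J}(u,v),w\rangle$. A generalized almost hypercomplex structure is a triple of pairwise anticommuting generalized almost complex structures with $\mathcal J_3=\mathcal J_1\mathcal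 J_2$; it is a generalized hypercomplex structure if every $N_{\mathcal J_i}=0$. *)

(* Courant algebroids in algebraic form.
   C^oo(M) is modelled by a commutative R-algebra A (R : realType),
   Gamma(E) by an A-module E, vector fields by R-linear derivations of A. *)
From HB Require Import structures.
From mathcomp Require Import all_boot all_order all_algebra.
From mathcomp Require Import reals.
Set Implicit Arguments. Unset Strict Implicit. Unset Printing Implicit Defensive.
Import GRing.Theory.
Local Open Scope ring_scope.

Section Courant.
Variables (R : realType) (A : comAlgType R) (E : lmodType A).

Definition derivation (X : A -> A) : Prop :=
  (forall f g, X (f + g) = X f + X g) /\
  (forall (r : R) f, X (r *: f) = r *: X f) /\
  (forall f g, X (f * g) = X f * g + f * X g).

Definition Alinear_form (phi : E -> A) : Prop :=
  (forall u v, phi (u + v) = phi u + phi v) /\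
  (forall (f : A) u, phi (f *: u) = f * phi u).

Definition Alinear_endo (J : E -> E) : Prop :=
  (forall u v, J (u + v) = J u + J v) /\
  (forall (f : A) u, J (f *: u) = f *: J u).

Definition courant_algebroid (pair : E -> E -> A) (br : E -> E -> E)
    (rho : E -> A -> A) : Prop :=
  (forall u v, pair u v = pair v u) /\
  (forall u, Alinear_form (pair u)) /\
  (forall u, (forall w, pair u w = 0) -> u = 0) /\
  (forall phi, Alinear_form phi -> exists u, forall w, pair u w = phi w) /\
  (forall u, derivation (rho u)) /\
  (forall u v f, rho (u + v) f = rho u f + rho v f) /\
  (forall (g : A) u f, rho (g *: u) f = g * rho u f) /\
  (forall u v w, br (u + v) w = br u w + br v w) /\
  (forall u v w, br u (v + w) = br u v + br u w) /\
  (forall (r : R) u v, br (r%:A *: u) v = r%:A *: br u v) /\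
  (forall (r : R) u v, br u (r%:A *: v) = r%:A *: br u v) /\
  (forall u v w, br u (br v w) = br (br u v) w + br v (br u w)) /\
  (forall u v f, rho (br u v) f = rho u (rho v f) - rho v (rho u f)) /\
  (forall u v (f : A), br u (f *: v) = rho u f *: v + f *: br u v) /\
  (forall u v w, rho u (pair v w) = pair (br u v) w + pair v (br u w)) /\
  (forall u v, 2%:R * pair (br u u) v = rho v (pair u u)).

(* generalized connection: D u v = D_u v *)
Definition gen_connection (pair : E -> E -> A) (rho : E -> A -> A)
    (D : E -> E -> E) : Prop :=
  (forall u1 u2 v, D (u1 + u2) v = D u1 v + D u2 v) /\
  (forall (f : A) u v, D (f *: u) v = f *: D u v) /\
  (forall u v1 v2, D u (v1 + v2) = D u v1 + D u v2) /\
  (forall (r : R) u v, D u (r%:A *: v) = r%:A *: D u v) /\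
  (forall u v (f : A), D u (f *: v) = rho u f *: v + f *: D u v) /\
  (forall u v w, rho u (pair v w) = pair (D u v) w + pair v (D u w)).

(* torsion as a 3-form:
   T^D(u,v,w) = < D_u v - D_v u - [u,v] + (Du)^* v , w >,
   with < (Du)^* v, w > = < v, D_w u > *)
Definition torsion3 (pair : E -> E -> A) (br : E -> E -> E)
    (D : E -> E -> E) (u v w : E) : A :=
  pair (D u v - D v u - br u v) w + pair v (D w u).

Definition gen_almost_complex (pair : E -> E -> A) (J : E -> E) : Prop :=
  Alinear_endo J /\
  (forall u v, pair (J u) (J v) = pair u v) /\
  (forall u, J (J u) = - u).

Definition gen_almost_hypercomplex (pair : E -> E -> A) (J1 J2 J3 : E -> E) :
    Prop :=
  gen_almost_complex pair J1 /\ gen_almost_complex pair J2 /\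
  gen_almost_complex pair J3 /\
  (forall u, J1 (J2 u) = - J2 (J1 u)) /\
  (forall u, J1 (J3 u) = - J3 (J1 u)) /\
  (forall u, J2 (J3 u) = - J3 (J2 u)) /\
  (forall u, J3 u = J1 (J2 u)).

Definition nijenhuis3 (pair : E -> E -> A) (br : E -> E -> E) (J : E -> E)
    (u v w : E) : A :=
  pair (br (J u) (J v) - br u v - J (br (J u) v + br u (J v))) w.

Definition preserves (D : E -> E -> E) (J : E -> E) : Prop :=
  forall u v, D u (J v) = J (D u v).

Definition covJ (D : E -> E -> E) (J : E -> E) (u v : E) : E :=
  D u (J v) - J (D u v).

Definition Done (D : E -> E -> E) (J2 : E -> E) (u v : E) : E :=
  D u v - (2^-1 : R)%:A *: J2 (covJ D J2 u v).

Definition pitilde (J1 J2 J3 : E -> E) (alpha : E -> E -> E -> A)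
    (u v w : E) : A :=
  alpha u v w + (alpha u (J1 v) (J1 w) + alpha u (J2 v) (J2 w)
                 + alpha u (J3 v) (J3 w)).

End Courant.

From mathcomp Require Import all_boot all_order all_algebra.
From mathcomp Require Import reals ring.
From Stdlib Require Import ClassicalEpsilon FunctionalExtensionality.
Import GRing.Theory Num.Theory.
Local Open Scope ring_scope.

Set Implicit Arguments.
Unset Strict Implicit.
Unset Printing Implicit Defensive.

(* D^(1) is the average of D and its J2-conjugate (u, v) |-> - J2 (D_u (J2 v)).
   Both are generalized connections preserving J1, because J2 anticommutes with
   J1, and averaging makes J2 parallel; hence J3 = J1 J2 is parallel as well.
   Subtracting from a hypercomplex connection a tensor eta that is skew in its
   last two arguments and anti-invariant under each J_i keeps it hypercomplex
   and subtracts the cyclic alternation of eta from its torsion.  The torsion T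
   is totally skew, so the alternation of pitilde(T) equals
   6 T - sum_i (T - T(J_i., J_i., .) - T(J_i., ., J_i.) - T(., J_i., J_i.)),
   and for a connection preserving J_i the i-th summand is exactly N_{J_i}.
   Taking eta = pitilde(T)/6 therefore leaves (1/6) sum_i N_{J_i}. *)

Lemma eq_sub_multiple (V : comPzRingType) (a b c d k : V) :
  c = d -> a - b = k * (c - d) -> a = b.
Proof. by move=> -> abk; apply/eqP; rewrite -subr_eq0 abk subrr mulr0. Qed.

Lemma mulVn_alg (R : numFieldType) (A : lalgType R) n :
  (0 < n)%N -> (n%:R^-1 : R)%:A * n%:R = 1 :> A.
Proof.
move=> n_gt0; rewrite -[n%:R : A]scaler_nat -scalerAl mul1r scalerA mulVf.
  by rewrite scale1r.
by rewrite pnatr_eq0 -lt0n.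
Qed.

Section CourantAlgebroid.
Variables (R : realType) (A : comAlgType R) (E : lmodType A).

(* Stated for this [A] rather than any [lalgType]: [ring] only recognises
   products built through the same instance path as the rest of the goal. *)
Lemma mulKn_alg n (x : A) :
  (0 < n)%N -> (n%:R^-1 : R)%:A * (n%:R * x) = x.
Proof. by move=> n_gt0; rewrite mulrA mulVn_alg // mul1r. Qed.

Lemma natr_alg_mulI n :
  (0 < n)%N -> injective (fun x : A => n%:R * x).
Proof.
by move=> n_gt0 x y /(congr1 (fun z => (n%:R^-1 : R)%:A * z)); rewrite !mulKn_alg.
Qed.

Lemma Alinear_formN (phi : E -> A) u : Alinear_form phi -> phi (- u) = - phi u.
Proof. by case=> _ phiZ; rewrite -scaleN1r phiZ mulN1r. Qed.

Lemma Alinear_endoN (J : E -> E) u : Alinear_endo J -> J (- u) = - J u.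
Proof. by case=> _ JZ; rewrite -scaleN1r JZ scaleN1r. Qed.

Lemma Alinear_formD (phi psi : E -> A) :
  Alinear_form phi -> Alinear_form psi -> Alinear_form (fun u => phi u + psi u).
Proof.
move=> [phiD phiZ] [psiD psiZ]; split=> [u v|f u]; first by rewrite phiD psiD; ring.
by rewrite phiZ psiZ mulrDr.
Qed.

Lemma Alinear_form_comp (phi : E -> A) (J : E -> E) :
  Alinear_form phi -> Alinear_endo J -> Alinear_form (fun u => phi (J u)).
Proof.
by move=> [phiD phiZ] [JD JZ]; split=> [u v|f u]; rewrite ?JD ?phiD ?JZ ?phiZ.
Qed.

Definition Atrilinear (alpha : E -> E -> E -> A) : Prop :=
  (forall v w, Alinear_form (fun u => alpha u v w)) /\
  (forall u w, Alinear_form (fun v => alpha u v w)) /\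
  (forall u v, Alinear_form (alpha u v)).

Definition skew12 (alpha : E -> E -> E -> A) : Prop :=
  forall u v w, alpha u v w = - alpha v u w.

Definition skew23 (alpha : E -> E -> E -> A) : Prop :=
  forall u v w, alpha u v w = - alpha u w v.

Section Trilinear.
Variable alpha : E -> E -> E -> A.
Hypothesis alpha_lin : Atrilinear alpha.

Lemma trilinearDl u1 u2 v w : alpha (u1 + u2) v w = alpha u1 v w + alpha u2 v w.
Proof. by case: alpha_lin => lin _; case: (lin v w). Qed.
Lemma trilinearZl f u v w : alpha (f *: u) v w = f * alpha u v w.
Proof. by case: alpha_lin => lin _; case: (lin v w). Qed.
Lemma trilinearDm u v1 v2 w : alpha u (v1 + v2) w = alpha u v1 w + alpha u v2 w.
Proof. by case: alpha_lin => _ [lin _]; case: (lin u w). Qed.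
Lemma trilinearZm u f v w : alpha u (f *: v) w = f * alpha u v w.
Proof. by case: alpha_lin => _ [lin _]; case: (lin u w). Qed.
Lemma trilinearDr u v w1 w2 : alpha u v (w1 + w2) = alpha u v w1 + alpha u v w2.
Proof. by case: alpha_lin => _ [_ lin]; case: (lin u v). Qed.
Lemma trilinearZr u v f w : alpha u v (f *: w) = f * alpha u v w.
Proof. by case: alpha_lin => _ [_ lin]; case: (lin u v). Qed.
Lemma trilinearNm u v w : alpha u (- v) w = - alpha u v w.
Proof. by rewrite -scaleN1r trilinearZm mulN1r. Qed.
Lemma trilinearNr u v w : alpha u v (- w) = - alpha u v w.
Proof. by case: alpha_lin => _ [_ lin]; rewrite Alinear_formN. Qed.

End Trilinear.

Definition nijenhuis_form (J : E -> E) (alpha : E -> E -> E -> A) u v w : A :=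
  alpha u v w - alpha (J u) (J v) w - alpha (J u) v (J w) - alpha u (J v) (J w).

Section PiTilde.
Variables (J1 J2 J3 : E -> E) (alpha : E -> E -> E -> A).

Lemma pitilde_trilinear :
  Alinear_endo J1 -> Alinear_endo J2 -> Alinear_endo J3 ->
  Atrilinear alpha -> Atrilinear (pitilde J1 J2 J3 alpha).
Proof.
move=> J1lin J2lin J3lin [lin1 [lin2 lin3]]; rewrite /pitilde.
split; [|split] => [v w|u w|u v]; do 3?[apply: Alinear_formD] => //.
- exact: (Alinear_form_comp (phi := fun x => alpha u x (J1 w))).
- exact: (Alinear_form_comp (phi := fun x => alpha u x (J2 w))).
- exact: (Alinear_form_comp (phi := fun x => alpha u x (J3 w))).
- exact: Alinear_form_comp.
- exact: Alinear_form_comp.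
- exact: Alinear_form_comp.
Qed.

Lemma pitilde_skew23 : skew23 alpha -> skew23 (pitilde J1 J2 J3 alpha).
Proof.
move=> skew u v w; rewrite /pitilde [alpha u v w]skew [alpha u (J1 v) _]skew.
by rewrite [alpha u (J2 v) _]skew [alpha u (J3 v) _]skew; ring.
Qed.

Lemma pitilde_alternating_sum : skew12 alpha -> skew23 alpha -> forall u v w,
  pitilde J1 J2 J3 alpha u v w - pitilde J1 J2 J3 alpha v u w
    + pitilde J1 J2 J3 alpha w u v =
  6%:R * alpha u v w - (nijenhuis_form J1 alpha u v w
    + nijenhuis_form J2 alpha u v w + nijenhuis_form J3 alpha u v w).
Proof.
move=> skew12 skew23 u v w; rewrite /pitilde /nijenhuis_form.
rewrite ![alpha v _ _]skew12 ![alpha w _ _]skew12 ![alpha _ w _]skew23; ring.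
Qed.

End PiTilde.

Variables (pair : E -> E -> A) (br : E -> E -> E) (rho : E -> A -> A).
Hypothesis HC : courant_algebroid pair br rho.

Lemma pairC u v : pair u v = pair v u.
Proof. by case: HC. Qed.
Lemma pair_linear u : Alinear_form (pair u).
Proof. by case: HC => _ []. Qed.
Lemma pairDr u v w : pair u (v + w) = pair u v + pair u w.
Proof. by case: (pair_linear u). Qed.
Lemma pairZr u f v : pair u (f *: v) = f * pair u v.
Proof. by case: (pair_linear u). Qed.
Lemma pairNr u v : pair u (- v) = - pair u v.
Proof. exact/Alinear_formN/pair_linear. Qed.
Lemma pairDl u v w : pair (u + v) w = pair u w + pair v w.
Proof. by rewrite !(pairC _ w) pairDr. Qed.
Lemma pairZl f u v : pair (f *: u) v = f * pair u v.
Proof. by rewrite !(pairC _ v) pairZr. Qed.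
Lemma pairNl u v : pair (- u) v = - pair u v.
Proof. by rewrite !(pairC _ v) pairNr. Qed.
Lemma pairBl u v w : pair (u - v) w = pair u w - pair v w.
Proof. by rewrite pairDl pairNl. Qed.

Lemma pair_inj u v : (forall w, pair u w = pair v w) -> u = v.
Proof.
move=> uv; apply/eqP; rewrite -subr_eq0; apply/eqP.
by case: HC => _ [_ [nondeg _]]; apply: nondeg => w; rewrite pairBl uv subrr.
Qed.

Lemma rho_pair_br u v w : rho u (pair v w) = pair (br u v) w + pair v (br u w).
Proof. by move: HC; do 14!case=> _; case. Qed.

Lemma pair_br_sym u v w : rho w (pair u v) = pair (br u v) w + pair (br v u) w.
Proof.
have brr x : 2%:R * pair (br x x) w = rho w (pair x x).
  by move: HC; do 15!case=> _.
have rhoD : forall f g, rho w (f + g) = rho w f + rho w g.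
  by move: HC; do 4!case=> _; case=> /(_ w) [].
have [brDl brDr] : (forall x y z, br (x + y) z = br x z + br y z) /\
                   (forall x y z, br x (y + z) = br x y + br x z).
  by move: HC; do 7!case=> _; case=> brDl [].
have := brr (u + v); rewrite brDl !brDr !pairDl !pairDr !rhoD -!brr (pairC v u).
move=> brr_uv; apply: (@natr_alg_mulI 2 isT) => /=.
by apply: (eq_sub_multiple (k := -1) brr_uv); ring.
Qed.

Section AlmostComplex.
Variable J : E -> E.
Hypothesis HJ : gen_almost_complex pair J.

Lemma acs_linear : Alinear_endo J.
Proof. by case: HJ. Qed.
Lemma acsD u v : J (u + v) = J u + J v.
Proof. by case: acs_linear. Qed.
Lemma acsZ f u : J (f *: u) = f *: J u.
Proof. by case: acs_linear. Qed.
Lemma acsN u : J (- u) = - J u.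
Proof. exact/Alinear_endoN/acs_linear. Qed.
Lemma acsK u : J (J u) = - u.
Proof. by case: HJ => _ []. Qed.
Lemma pair_acs u v : pair (J u) (J v) = pair u v.
Proof. by case: HJ => _ []. Qed.
Lemma pair_acsl u v : pair (J u) v = - pair u (J v).
Proof. by rewrite -pair_acs acsK pairNl. Qed.

End AlmostComplex.

Section Hypercomplex.
Variables J1 J2 J3 : E -> E.
Hypothesis HH : gen_almost_hypercomplex pair J1 J2 J3.

Lemma hyper_acs1 : gen_almost_complex pair J1.
Proof. by case: HH. Qed.
Lemma hyper_acs2 : gen_almost_complex pair J2.
Proof. by case: HH => _ []. Qed.
Lemma hyper_acs3 : gen_almost_complex pair J3.
Proof. by case: HH => _ [_ []]. Qed.

Lemma hyperJ12 u : J1 (J2 u) = J3 u.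
Proof. by move: HH; do 6!case=> _. Qed.
Lemma hyperJ21 u : J2 (J1 u) = - J3 u.
Proof. by move: HH; do 3!case=> _; case=> J12C _; rewrite -hyperJ12 J12C opprK. Qed.
Lemma hyperJ13 u : J1 (J3 u) = - J2 u.
Proof. by rewrite -hyperJ12 (acsK hyper_acs1). Qed.
Lemma hyperJ31 u : J3 (J1 u) = J2 u.
Proof. by move: HH; do 4!case=> _; case=> J13C _; rewrite -[LHS]opprK -J13C hyperJ13 opprK. Qed.
Lemma hyperJ32 u : J3 (J2 u) = - J1 u.
Proof. by rewrite -hyperJ12 (acsK hyper_acs2) (acsN hyper_acs1). Qed.
Lemma hyperJ23 u : J2 (J3 u) = J1 u.
Proof. by move: HH; do 5!case=> _; case=> J23C _; rewrite J23C hyperJ32 opprK. Qed.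

Definition hyperE := (hyperJ12, hyperJ21, hyperJ13, hyperJ31, hyperJ23, hyperJ32,
  acsK hyper_acs1, acsK hyper_acs2, acsK hyper_acs3,
  acsN hyper_acs1, acsN hyper_acs2, acsN hyper_acs3).

Lemma pitilde_acs_skew alpha J : Atrilinear alpha -> J = J1 \/ J = J2 \/ J = J3 ->
  forall u v w, pitilde J1 J2 J3 alpha u (J v) w = - pitilde J1 J2 J3 alpha u v (J w).
Proof.
move=> alpha_lin J_in u v w; rewrite /pitilde.
by case: J_in => [|[|]] ->; rewrite !hyperE !(trilinearNm alpha_lin, trilinearNr alpha_lin); ring.
Qed.

End Hypercomplex.

Lemma preserves_comp (D : E -> E -> E) (J K L : E -> E) :
  preserves D J -> preserves D K -> (forall u, J (K u) = L u) -> preserves D L.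
Proof. by move=> DJ DK JKL u v; rewrite -!JKL DJ DK. Qed.

Section Connection.
Variable D : E -> E -> E.
Hypothesis HD : gen_connection pair rho D.

Lemma connDl u1 u2 v : D (u1 + u2) v = D u1 v + D u2 v.
Proof. by case: HD. Qed.
Lemma connZl f u v : D (f *: u) v = f *: D u v.
Proof. by case: HD => _ []. Qed.
Lemma connDr u v1 v2 : D u (v1 + v2) = D u v1 + D u v2.
Proof. by case: HD => _ [_ []]. Qed.
Lemma connZr (r : R) u v : D u (r%:A *: v) = r%:A *: D u v.
Proof. by case: HD => _ [_ [_ []]]. Qed.
Lemma connL u v f : D u (f *: v) = rho u f *: v + f *: D u v.
Proof. by case: HD => _ [_ [_ [_ []]]]. Qed.
Lemma connM u v w : rho u (pair v w) = pair (D u v) w + pair v (D u w).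
Proof. by case: HD => _ [_ [_ [_ [_]]]]. Qed.
Lemma connNr u v : D u (- v) = - D u v.
Proof.
have D0 : D u 0 = 0 by apply: (addrI (D u 0)); rewrite -connDr !addr0.
by apply/eqP; rewrite -addr_eq0 -connDr addNr D0.
Qed.

Local Notation T := (torsion3 pair br D).

Lemma torsion3_skew12 : skew12 T.
Proof.
move=> u v w; have := pair_br_sym u v w; rewrite connM /torsion3 !pairBl.
by rewrite (pairC (D w u)) => sym; apply: (eq_sub_multiple (k := 1) sym); ring.
Qed.

Lemma torsion3_skew23 : skew23 T.
Proof.
move=> u v w; have := rho_pair_br u v w; rewrite connM /torsion3 !pairBl.
rewrite (pairC v (D u w)) (pairC v (br u w)) (pairC w (D v u)) (pairC v (D w u)).
by move=> inv; apply: (eq_sub_multiple (k := 1) inv); ring.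
Qed.

Lemma torsion3_cyclic u v w : T u v w = T v w u.
Proof. by rewrite torsion3_skew12 torsion3_skew23 opprK. Qed.

Lemma torsion3_trilinear : Atrilinear T.
Proof.
have linr u v : Alinear_form (T u v).
  by split=> [w1 w2|f w]; rewrite /torsion3 ?(pairDr, connDl, pairZr, connZl); ring.
split; [|split] => [v w|u w|u v]; last exact: linr.
  by split=> [x y|f x] /=; rewrite !(torsion3_cyclic _ v w); case: (linr v w).
by split=> [x y|f x] /=; rewrite !(torsion3_cyclic u _ w) !(torsion3_cyclic _ w u);
  case: (linr w u).
Qed.

Lemma nijenhuis3_torsion J : gen_almost_complex pair J -> preserves D J ->
  forall u v w, nijenhuis3 pair br J u v w = nijenhuis_form J T u v w.
Proof.
move=> HJ DJ u v w.
have brT a b c : pair (br a b) c = pair (D a b) c - pair (D b a) c + pair b (D c a) - T a b c.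
  by rewrite /torsion3 !pairBl; ring.
rewrite /nijenhuis3 /nijenhuis_form !pairBl (pair_acsl HJ) pairDl !brT !DJ.
rewrite ?(pair_acs HJ, pair_acsl HJ, acsK HJ, pairNr, pairNl, opprK); ring.
Qed.

End Connection.

Definition conj_connection (J : E -> E) (D : E -> E -> E) u v : E := - J (D u (J v)).

Definition conj_average (J : E -> E) (D : E -> E -> E) u v : E :=
  (2^-1 : R)%:A *: D u v + (2^-1 : R)%:A *: conj_connection J D u v.

Lemma half_alg_add : (2^-1 : R)%:A + (2^-1 : R)%:A = 1 :> A.
Proof.
have := @mulVn_alg _ A 2 isT.
by rewrite (mulr_natr ((2^-1 : R)%:A)) (mulr2n ((2^-1 : R)%:A)).
Qed.

Lemma gen_connection_conj J D : gen_almost_complex pair J ->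
  gen_connection pair rho D -> gen_connection pair rho (conj_connection J D).
Proof.
move=> HJ HD; rewrite /conj_connection.
split; [|split; [|split; [|split; [|split]]]] => [u1 u2 v|f u v|u v1 v2|r u v|u v f|u v w].
- by rewrite (connDl HD) (acsD HJ) opprD.
- by rewrite (connZl HD) (acsZ HJ) scalerN.
- by rewrite (acsD HJ) (connDr HD) (acsD HJ) opprD.
- by rewrite (acsZ HJ) (connZr HD) (acsZ HJ) scalerN.
- by rewrite (acsZ HJ) (connL HD) (acsD HJ) !(acsZ HJ) (acsK HJ) opprD scalerN opprK scalerN.
- rewrite -(pair_acs HJ v w) (connM HD) !pairNl !(pair_acsl HJ) opprK pairNr.
  by rewrite [pair v _]pairC (pair_acsl HJ) opprK [pair _ (J v)]pairC.
Qed.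

Lemma gen_connection_affine (s t : A) D D' : s + t = 1 ->
  gen_connection pair rho D -> gen_connection pair rho D' ->
  gen_connection pair rho (fun u v => s *: D u v + t *: D' u v).
Proof.
move=> st HD HD'.
split; [|split; [|split; [|split; [|split]]]] => [u1 u2 v|f u v|u v1 v2|r u v|u v f|u v w].
- by rewrite (connDl HD) (connDl HD') !scalerDr addrACA.
- by rewrite (connZl HD) (connZl HD') scalerDr !scalerA (mulrC s) (mulrC t).
- by rewrite (connDr HD) (connDr HD') !scalerDr addrACA.
- by rewrite (connZr HD) (connZr HD') scalerDr !scalerA (mulrC s) (mulrC t).
- apply: pair_inj => w; rewrite (connL HD) (connL HD').
  have {st}-> : t = 1 - s by rewrite -st; ring.
  by rewrite !(pairDl, pairZl); ring.
- rewrite !(pairDl, pairZl, pairDr, pairZr) -[rho u _]mul1r -st mulrDl.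
  by rewrite {1}(connM HD) (connM HD'); ring.
Qed.

Lemma gen_connection_conj_average J D : gen_almost_complex pair J ->
  gen_connection pair rho D -> gen_connection pair rho (conj_average J D).
Proof.
move=> HJ HD; apply: (gen_connection_affine half_alg_add HD).
exact: gen_connection_conj.
Qed.

Lemma Done_conj_average J D : gen_almost_complex pair J -> Done D J = conj_average J D.
Proof.
move=> HJ; do 2 apply: functional_extensionality => ?; apply: pair_inj => w.
rewrite /Done /conj_average /conj_connection /covJ (acsD HJ) (acsN HJ) (acsK HJ) opprK.
by rewrite !(pairDl, pairZl, pairNl) -{1}[pair (D _ _) w](@mulKn_alg 2) //; ring.
Qed.

Lemma preserves_conj_average J D : gen_almost_complex pair J ->
  gen_connection pair rho D -> preserves (conj_average J D) J.
Proof.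
move=> HJ HD u v; rewrite /conj_average /conj_connection (acsK HJ) (connNr HD).
by rewrite (acsN HJ) opprK (acsD HJ) !(acsZ HJ) (acsN HJ) (acsK HJ) opprK addrC.
Qed.

Lemma preserves_conj_average_anticomm J K D : gen_almost_complex pair J ->
  Alinear_endo K -> gen_connection pair rho D -> preserves D K ->
  (forall u, J (K u) = - K (J u)) -> preserves (conj_average J D) K.
Proof.
move=> HJ [KD KZ] HD DK JK u v; rewrite /conj_average /conj_connection.
rewrite DK JK (connNr HD) DK (acsN HJ) opprK JK KD !KZ.
by rewrite (Alinear_endoN _ (conj KD KZ)).
Qed.

Section FirstModification.
Variables (J1 J2 J3 : E -> E) (D : E -> E -> E).
Hypotheses (HH : gen_almost_hypercomplex pair J1 J2 J3)
  (HD : gen_connection pair rho D) (DJ1 : preserves D J1).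

Lemma Done_gen_connection : gen_connection pair rho (Done D J2).
Proof.
rewrite (Done_conj_average D (hyper_acs2 HH)).
exact: gen_connection_conj_average (hyper_acs2 HH) HD.
Qed.

Lemma Done_preserves :
  [/\ preserves (Done D J2) J1, preserves (Done D J2) J2 & preserves (Done D J2) J3].
Proof.
rewrite (Done_conj_average D (hyper_acs2 HH)).
have D1J1 : preserves (conj_average J2 D) J1.
  apply: preserves_conj_average_anticomm (hyper_acs2 HH) _ HD DJ1 _.
    exact: acs_linear (hyper_acs1 HH).
  by move=> u; rewrite (hyperJ21 HH) (hyperJ12 HH).
have D1J2 := preserves_conj_average (hyper_acs2 HH) HD.
by split=> //; apply: preserves_comp D1J1 D1J2 (hyperJ12 HH).
Qed.

End FirstModification.

Section Shift.
Variables (D Dt : E -> E -> E) (k : A) (eta : E -> E -> E -> A).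
Hypothesis Dt_def : forall u v w, pair (Dt u v) w = pair (D u v) w - k * eta u v w.

Lemma torsion3_shift u v w : torsion3 pair br Dt u v w =
  torsion3 pair br D u v w - k * (eta u v w - eta v u w + eta w u v).
Proof. by rewrite /torsion3 !pairBl ![pair v _]pairC !Dt_def; ring. Qed.

Hypothesis HD : gen_connection pair rho D.

Lemma gen_connection_shift : Atrilinear eta -> skew23 eta -> gen_connection pair rho Dt.
Proof.
move=> lin skew.
split; [|split; [|split; [|split; [|split]]]] => [u1 u2 v|f u v|u v1 v2|r u v|u v f|u v w].
- apply: pair_inj => w; rewrite !(Dt_def, pairDl, connDl HD, trilinearDl lin); ring.
- apply: pair_inj => w; rewrite !(Dt_def, pairZl, connZl HD, trilinearZl lin); ring.
- apply: pair_inj => w; rewrite !(Dt_def, pairDl, connDr HD, trilinearDm lin); ring.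
- apply: pair_inj => w; rewrite !(Dt_def, pairZl, connZr HD, trilinearZm lin); ring.
- apply: pair_inj => w.
  rewrite !(Dt_def, pairDl, pairZl, connL HD, trilinearZm lin); ring.
- by rewrite (pairC v (Dt u w)) !Dt_def (connM HD) (pairC v (D u w)) (skew u w v); ring.
Qed.

Lemma preserves_shift J : gen_almost_complex pair J -> preserves D J ->
  (forall u v w, eta u (J v) w = - eta u v (J w)) -> preserves Dt J.
Proof.
move=> HJ DJ etaJ u v; apply: pair_inj => w.
by rewrite Dt_def DJ etaJ !(pair_acsl HJ) Dt_def; ring.
Qed.

End Shift.

Lemma exists_shift D k eta : Atrilinear eta ->
  exists Dt, forall u v w, pair (Dt u v) w = pair (D u v) w - k * eta u v w.
Proof.
move=> lin.
have repr u v : exists x, forall w, pair x w = pair (D u v) w - k * eta u v w.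
  case: HC => _ [_ [_ [repr _]]]; apply: repr.
  by split=> [w1 w2|f w]; rewrite ?(pairDr, pairZr, trilinearDr lin, trilinearZr lin); ring.
exists (fun u v => proj1_sig (constructive_indefinite_description _ (repr u v))).
by move=> u v w; case: (constructive_indefinite_description _ _).
Qed.

Section SecondModification.
Variables (J1 J2 J3 : E -> E) (D : E -> E -> E).
Hypotheses (HH : gen_almost_hypercomplex pair J1 J2 J3)
  (HD : gen_connection pair rho D).

Local Notation eta := (pitilde J1 J2 J3 (torsion3 pair br D)).

Lemma pitilde_torsion_trilinear : Atrilinear eta.
Proof.
apply: pitilde_trilinear (torsion3_trilinear HD); apply: acs_linear;
  [exact: hyper_acs1 HH | exact: hyper_acs2 HH | exact: hyper_acs3 HH].
Qed.

Lemma Dtilde_exists : exists Dt, forall u v w,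
  pair (Dt u v) w = pair (D u v) w - (6^-1 : R)%:A * eta u v w.
Proof. exact: exists_shift pitilde_torsion_trilinear. Qed.

Variable Dt : E -> E -> E.
Hypothesis Dt_def : forall u v w,
  pair (Dt u v) w = pair (D u v) w - (6^-1 : R)%:A * eta u v w.

Lemma Dtilde_gen_connection : gen_connection pair rho Dt.
Proof.
apply: gen_connection_shift Dt_def HD pitilde_torsion_trilinear _.
exact/pitilde_skew23/torsion3_skew23.
Qed.

Hypotheses (DJ1 : preserves D J1) (DJ2 : preserves D J2) (DJ3 : preserves D J3).

Lemma Dtilde_preserves : [/\ preserves Dt J1, preserves Dt J2 & preserves Dt J3].
Proof.
have DtJ J : gen_almost_complex pair J -> preserves D J ->
    J = J1 \/ J = J2 \/ J = J3 -> preserves Dt J.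
  move=> HJ DJ J_in; apply: (preserves_shift Dt_def HJ DJ).
  exact: (pitilde_acs_skew HH (torsion3_trilinear HD) J_in).
split.
- by apply: (DtJ _ (hyper_acs1 HH) DJ1); left.
- by apply: (DtJ _ (hyper_acs2 HH) DJ2); right; left.
- by apply: (DtJ _ (hyper_acs3 HH) DJ3); right; right.
Qed.

Lemma Dtilde_torsion u v w : torsion3 pair br Dt u v w =
  (6^-1 : R)%:A * (nijenhuis3 pair br J1 u v w + nijenhuis3 pair br J2 u v w
                   + nijenhuis3 pair br J3 u v w).
Proof.
rewrite (torsion3_shift Dt_def).
rewrite (pitilde_alternating_sum _ _ _ (torsion3_skew12 HD) (torsion3_skew23 HD)).
rewrite (nijenhuis3_torsion (hyper_acs1 HH) DJ1) (nijenhuis3_torsion (hyper_acs2 HH) DJ2).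
rewrite (nijenhuis3_torsion (hyper_acs3 HH) DJ3).
by rewrite -{1}[torsion3 _ _ _ u v w](@mulKn_alg 6) //; ring.
Qed.

End SecondModification.

End CourantAlgebroid.

Theorem proposition4p4 (R : realType) (A : comAlgType R) (E : lmodType A)
    (pair : E -> E -> A) (br : E -> E -> E) (rho : E -> A -> A)
    (J1 J2 J3 : E -> E) (D : E -> E -> E) :
  courant_algebroid pair br rho ->
  gen_almost_hypercomplex pair J1 J2 J3 ->
  gen_connection pair rho D ->
  preserves D J1 ->
  let D1 := Done D J2 in
  let eta := pitilde J1 J2 J3 (torsion3 pair br D1) in
  let is_Dtilde (Dt : E -> E -> E) :=
    forall u v w, pair (Dt u v) w = pair (D1 u v) w - (6^-1 : R)%:A * eta u v w in
  let N u v w := nijenhuis3 pair br J1 u v w + nijenhuis3 pair br J2 u v w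
                 + nijenhuis3 pair br J3 u v w in
  (gen_connection pair rho D1 /\
   preserves D1 J1 /\ preserves D1 J2 /\ preserves D1 J3) /\
  (exists Dt, is_Dtilde Dt) /\
  (forall Dt, is_Dtilde Dt ->
     gen_connection pair rho Dt /\
     preserves Dt J1 /\ preserves Dt J2 /\ preserves Dt J3 /\
     (forall u v w, torsion3 pair br Dt u v w = (6^-1 : R)%:A * N u v w) /\
     ((forall u v w, nijenhuis3 pair br J1 u v w = 0 /\
                     nijenhuis3 pair br J2 u v w = 0 /\
                     nijenhuis3 pair br J3 u v w = 0) ->
      forall u v w, torsion3 pair br Dt u v w = 0)).
Proof.
move=> HC HH HD DJ1 D1 eta is_Dtilde N.
have D1_conn : gen_connection pair rho D1 := Done_gen_connection HC HH HD.
have [D1J1 D1J2 D1J3] := Done_preserves HC HH HD DJ1.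
split; first by [].
split; first exact: (Dtilde_exists HC HH D1_conn).
move=> Dt Dt_def.
have [DtJ1 DtJ2 DtJ3] := Dtilde_preserves HC HH D1_conn Dt_def D1J1 D1J2 D1J3.
have DtT := Dtilde_torsion HC HH D1_conn Dt_def D1J1 D1J2 D1J3.
split; first exact: (Dtilde_gen_connection HC HH D1_conn Dt_def).
do 4!split=> //.
by move=> N0 u v w; rewrite DtT /N; have [-> [-> ->]] := N0 u v w; rewrite !addr0 mulr0.
Qed.
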